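(* Let $\{\tilde{\mathbf M}_t\}$ be a forward-in-time continuous-time Markov jump process on $\mathcal N$ whose generator on each interval $(t_d,t_{d+1}]$ is $\tilde{\boldsymbol\Lambda}^d$, started from any initial distribution. Let $C_t$ denote the number of type-$c$ haplotypes in $\tilde{\mathbf M}_t$, i.e. $C_t=n^{(c)}$ when $\tilde{\mathbf M}_t=\mathbf n$. Then $\{C_t\}$ is itself a (forward-in-time) Markov jump process on $\{0,1,\dots,n\}$ whose generator on $(t_d,t_{d+1}]$ is $\boldsymbol\Gamma^d$. Moreover, for all $m,m'\in\{0,\dots,n\}$ and $s\ge0$, and provided $\rho>0$, $$\gamma^d_m\big[e^{\boldsymbol\Gamma^d s}\big]_{m,m'}=\gamma^d_{m'}\big[e^{\boldsymbol\Gamma^d s}\big]_{m',m},$$ where $(\gamma^d_0,\dots,\gamma^d_n)$ is the stationary distribution of $\boldsymbol\Gamma^d$.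
   Context: **Two-locus model.** - There are two loci, the left (''$a$'') and the right (''$b$''). Alleles take values in a finite set $\mathcal A$. - Mutation occurs at rate $\theta/2$ per locus per lineage; given a mutation, allele $i$ becomes $j$ with probability $P_{ij}$, where $\mathbf P=(P_{ij})$ is a stochastic matrix on $\mathcal A$. The recombination parameter is $\rho\ge0$. - The population size is piecewise constant: there are times $-\infty=t_{-D}<t_{-D+1}<\dots<t_{-1}<t_0=0$, and on $(t_d,t_{d+1}]$ the scaled size is $\eta_d>0$. **Haplotypes and configurations.** - A haplotype is of type $a$, $b$ or $c$: - type $a$ is $(i,* )$; - type $b$ is $( *,j)$; - type $c$ is $(k,\ell)$; with $i,j,k,\ell\in\mathcal A$ and $*$ denoting a missing allele. - A configuration $\mathbf n=\{n_{i*},n_{*j},n_{k\ell}\}$ records the multiplicities of the haplotypes. Write $n^{(a)}=\sum_i n_{i*}$, $n^{(b)}=\sum_j n_{*j}$, $n^{(c)}=\sum_{k,\ell}n_{k\ell}$ and $n^{(abc)}=(n^{(a)},n^{(b)},n^{(c)})$. - $\mathbf e_h$ is the configuration consisting of a single haplotype $h$. **The space $\mathcal N$ and the generator $\tilde{\boldsymbol\Lambda}^d$.** - Fix $n\ge1$ and let $\mathcal N=\{\mathbf n: n^{(abc)}=(k,k,n-k),\ 0\le k\le n\}$. - $\tilde{\boldsymbol\Lambda}^d$ is the generator matrix indexed by $\mathcal N$. For $\mathbf m\ne\mathbf n$, its entry $\tilde\Lambda^d_{\mathbf n,\mathbf m}$ is the sum of all the following rates (over $i,j,k,l\in\mathcal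 A$) whose listed target equals $\mathbf m$: - target $\mathbf n-\mathbf e_{i*}+\mathbf e_{j*}$, rate $\frac1{\eta_d}n_{i*}\big(\tfrac12 n_{j*}+\sum_{k}n_{jk}\big)+\frac\theta2P_{ij}n_{i*}$; - target $\mathbf n-\mathbf e_{*i}+\mathbf e_{*j}$, rate $\frac1{\eta_d}n_{*i}\big(\tfrac12 n_{*j}+\sum_k n_{kj}\big)+\frac\theta2P_{ij}n_{*i}$; - target $\mathbf n-\mathbf e_{ij}+\mathbf e_{kl}$, rate $\frac1{2\eta_d}n_{ij}n_{kl}+\frac\theta2(\delta_{ik}P_{jl}+\delta_{jl}P_{ik})n_{ij}$; - target $\mathbf n-\mathbf e_{ij}+\mathbf e_{i*}+\mathbf e_{*j}$, rate $\frac\rho2 n_{ij}$; - target $\mathbf n-\mathbf e_{i*}-\mathbf e_{*j}+\mathbf e_{ij}$, rate $\frac1{\eta_d}n_{i*}n_{*j}$. - The diagonal entries are chosen so that each row of $\tilde{\boldsymbol\Lambda}^d$ sums to $0$. **The matrix $\boldsymbol\Gamma^d$.** $\boldsymbol\Gamma^d$ is the tridiagonal generator indexed by $\{0,1,\dots,n\}$ with - $\Gamma^d_{m,m-1}=\frac\rho2 m$, - $\Gamma^d_{m,m+1}=\frac{(n-m)^2}{\eta_d}$, - $\Gamma^d_{m,m}=-\Gamma^d_{m,m-1}-\Gamma^d_{m,m+1}$. *)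

From Stdlib Require Import Reals ClassicalEpsilon Factorial.
From mathcomp Require Import all_boot.
Set Implicit Arguments. Unset Strict Implicit. Unset Printing Implicit Defensive.

Local Open Scope R_scope.

Definition mat (S : finType) := S -> S -> R.

Definition mmul (S : finType) (M1 M2 : mat S) : mat S :=
  fun i j => \big[Rplus/0]_(k : S) (M1 i k * M2 k j).

Definition mid (S : finType) : mat S := fun i j => if i == j then 1 else 0.

Definition mpow (S : finType) (Q : mat S) (k : nat) : mat S :=
  iter k (fun M => mmul M Q) (@mid S).

(* matrix exponential e^{Q s}, entrywise the sum of the series
   sum_k s^k/k! (Q^k)_{ij} (the series always converges). *)
Definition mexp (S : finType) (Q : mat S) (s : R) : mat S :=
  fun i j => epsilon (inhabits 0)
    (fun v => infinite_sum (fun k => s ^ k / INR (Factorial.fact k) * mpow Q k i j) v).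

(* Epochs are re-indexed d = 0..D-1 (paper's d = -D..-1).  Epoch d is the
   interval (lo d, hi d] with lo 0 = -infinity, lo d = tb d (d >= 1),
   hi d = tb (d+1) if d+1 < D, and hi (D-1) = 0 (= t_0). *)
Definition epoch_hi (D : nat) (tb : nat -> R) (d : nat) : R :=
  if (d.+1 < D)%N then tb d.+1 else 0.

(* length of (u,t] intersected with epoch d *)
Definition epoch_len (D : nat) (tb : nat -> R) (u t : R) (d : nat) : R :=
  Rmax 0 (Rmin t (epoch_hi D tb d) - (if d == 0%N then u else Rmax u (tb d))).

Fixpoint trans_upto (S : finType) (D : nat) (tb : nat -> R) (G : nat -> mat S)
    (u t : R) (k : nat) : mat S :=
  match k with
  | 0%N => @mid S
  | k'.+1 => mmul (trans_upto D tb G u t k') (mexp (G k') (epoch_len D tb u t k'))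
  end.

(* transition matrix P(u,t) of the Markov jump process whose generator on
   epoch d is G d *)
Definition trans (S : finType) (D : nat) (tb : nat -> R) (G : nat -> mat S)
    (u t : R) : mat S := trans_upto D tb G u t D.

(* lprob f Pt t0 x0 ts cs = P( f(X_{t_1}) = c_1, ..., f(X_{t_k}) = c_k | X_{t0} = x0 )
   for the Markov process with transition matrices Pt. *)
Fixpoint lprob (S T : finType) (f : S -> T) (Pt : R -> R -> mat S)
    (t0 : R) (x0 : S) (ts : seq R) (cs : seq T) : R :=
  match ts, cs with
  | t :: ts', c :: cs' =>
      \big[Rplus/0]_(x : S | f x == c) (Pt t0 t x0 x * lprob f Pt t x ts' cs')
  | [::], [::] => 1
  | _, _ => 0
  end.

(* law of (f(X_{t_1}),...,f(X_{t_k})) when X_u has distribution pi *)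
Definition fdd (S T : finType) (f : S -> T) (Pt : R -> R -> mat S) (u : R)
    (pi : S -> R) (ts : seq R) (cs : seq T) : R :=
  \big[Rplus/0]_(x0 : S) (pi x0 * lprob f Pt u x0 ts cs).

Definition pushfwd (S T : finType) (f : S -> T) (pi : S -> R) : T -> R :=
  fun c => \big[Rplus/0]_(x : S | f x == c) pi x.

Fixpoint times_ok (u : R) (ts : seq R) : Prop :=
  match ts with
  | [::] => True
  | t :: ts' => u <= t <= 0 /\ times_ok t ts'
  end.

(* inl (inl i) = haplotype (i,-) type a ; inl (inr j) = (-,j) type b ; inr (k,l) type c *)
Definition hap (A : finType) : finType := (A + A + A * A)%type.
Definition ha (A : finType) (i : A) : hap A := inl (inl i).
Definition hb (A : finType) (j : A) : hap A := inl (inr j).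
Definition hc (A : finType) (k l : A) : hap A := inr (k, l).

(* multiplicities, each at most n *)
Definition cfg (A : finType) (n : nat) := {ffun hap A -> 'I_n.+1}.

Definition na A n (x : cfg A n) : nat := (\sum_(i : A) x (ha i))%N.
Definition nb A n (x : cfg A n) : nat := (\sum_(j : A) x (hb j))%N.
Definition nc A n (x : cfg A n) : nat := (\sum_(p : A * A) x (hc p.1 p.2))%N.

(* n^{(abc)} = (k, k, n-k) *)
Definition inN A n (x : cfg A n) : bool := (na x == nb x) && (na x + nc x == n)%N.

Definition Nsp (A : finType) (n : nat) := {x : cfg A n | inN x}.

(* y = x - sum_{h in rem} e_h + sum_{h in add} e_h  (as nat equations) *)
Definition mv A n (x y : cfg A n) (rem add : seq (hap A)) : bool :=
  [forall h, (y h + count_mem h rem == x h + count_mem h add)%N].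

Definition ind (b : bool) : R := if b then 1 else 0.

Definition cnt A n (x : Nsp A n) (h : hap A) : R := INR (val x h).

Definition Lam_off (A : finType) (n : nat) (theta rho : R) (P : A -> A -> R)
    (eta : R) (x y : Nsp A n) : R :=
  let X := val x in let Y := val y in let c := cnt x in
    \big[Rplus/0]_(i : A) \big[Rplus/0]_(j : A)
      (ind (mv X Y [:: ha i] [:: ha j]) *
        (/ eta * (c (ha i) * (/ 2 * c (ha j) + \big[Rplus/0]_(k : A) c (hc j k)))
         + theta / 2 * P i j * c (ha i)))
  + \big[Rplus/0]_(i : A) \big[Rplus/0]_(j : A)
      (ind (mv X Y [:: hb i] [:: hb j]) *
        (/ eta * (c (hb i) * (/ 2 * c (hb j) + \big[Rplus/0]_(k : A) c (hc k j)))
         + theta / 2 * P i j * c (hb i)))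
  + \big[Rplus/0]_(i : A) \big[Rplus/0]_(j : A) \big[Rplus/0]_(k : A) \big[Rplus/0]_(l : A)
      (ind (mv X Y [:: hc i j] [:: hc k l]) *
        (/ (2 * eta) * c (hc i j) * c (hc k l)
         + theta / 2 * (ind (i == k) * P j l + ind (j == l) * P i k) * c (hc i j)))
  + \big[Rplus/0]_(i : A) \big[Rplus/0]_(j : A)
      (ind (mv X Y [:: hc i j] [:: ha i; hb j]) * (rho / 2 * c (hc i j)))
  + \big[Rplus/0]_(i : A) \big[Rplus/0]_(j : A)
      (ind (mv X Y [:: ha i; hb j] [:: hc i j]) * (/ eta * c (ha i) * c (hb j))).

Definition Lam (A : finType) (n : nat) (theta rho : R) (P : A -> A -> R)
    (eta : R) : mat (Nsp A n) :=
  fun x y => if x == y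
    then - \big[Rplus/0]_(z : Nsp A n | z != x) Lam_off theta rho P eta x z
    else Lam_off theta rho P eta x y.

Definition ccount (A : finType) (n : nat) (x : Nsp A n) : 'I_n.+1 := inord (nc (val x)).

Definition Gam (n : nat) (rho eta : R) : mat 'I_n.+1 :=
  fun m m' =>
    let down := rho / 2 * INR m in
    let up := (INR (n - m)) ^ 2 / eta in
    if (m' : nat) == m.+1 then up
    else if ((m' : nat).+1 == m) then down
    else if m' == m then - down - up
    else 0.

(* The count C_t is a lumping of the configuration chain.  A transition of
   \tilde\Lambda^d changes n^(c) by at most one: only recombination lowers it, at
   total rate rho/2 n^(c), and only the coalescence of an a- with a b-haplotype
   raises it, at total rate n^(a) n^(b) / eta_d = (n - n^(c))^2 / eta_d.  Hence the
   rates of \tilde\Lambda^d summed over each level set of the count are the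
   entries of \Gamma^d (strong lumpability), and this identity passes to matrix
   products, to exponentials, to the transition matrices across epochs, and finally
   to the finite-dimensional distributions.  For the second claim, a stationary
   vector of the birth-death generator \Gamma^d balances the flux across every cut
   {0..k} | {k+1..n}; this detailed balance passes to the powers of \Gamma^d and
   hence to e^{\Gamma^d s}. *)

From Pilot Require Import Defs.
From Stdlib Require Import Reals Lra ClassicalEpsilon FunctionalExtensionality.
From Coquelicot Require Import Hierarchy Series.
From HB Require Import structures.
From mathcomp Require Import all_boot zify.
Local Open Scope R_scope.

HB.instance Definition _ := Monoid.isComLaw.Build R 0 Rplus
  (fun x y z => esym (Rplus_assoc x y z)) Rplus_comm Rplus_0_l.
HB.instance Definition _ := Monoid.isComLaw.Build R 1 Rmult
  (fun x y z => esym (Rmult_assoc x y z)) Rmult_comm Rmult_1_l.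
HB.instance Definition _ := Monoid.isMulLaw.Build R 0 Rmult Rmult_0_l Rmult_0_r.
HB.instance Definition _ := Monoid.isAddLaw.Build R Rmult Rplus
  Rmult_plus_distr_r Rmult_plus_distr_l.

Lemma Rle_sum {I : Type} (r : seq I) {P : pred I} {F G : I -> R} :
  (forall i, P i -> F i <= G i) ->
  \big[Rplus/0]_(i <- r | P i) F i <= \big[Rplus/0]_(i <- r | P i) G i.
Proof. by move=> FG; apply: big_ind2 => [|a b c d|]; [lra | lra | exact: FG]. Qed.

Lemma Rsum_ge0 {I : Type} (r : seq I) (P : pred I) {F : I -> R} :
  (forall i, P i -> 0 <= F i) -> 0 <= \big[Rplus/0]_(i <- r | P i) F i.
Proof. by move=> F0; apply: big_ind => [|a b|]; [lra | lra | exact: F0]. Qed.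

Lemma Rabs_sum {I : Type} (r : seq I) {P : pred I} {F : I -> R} :
  Rabs (\big[Rplus/0]_(i <- r | P i) F i) <= \big[Rplus/0]_(i <- r | P i) Rabs (F i).
Proof.
apply: (big_ind2 (fun a b => Rabs a <= b)) => [|a b c d ab cd|i _].
- by rewrite Rabs_R0; lra.
- by have := Rabs_triang a c; lra.
- lra.
Qed.

Lemma Rle_term_sum {S : finType} (F : S -> R) (i : S) :
  (forall j, 0 <= F j) -> F i <= \big[Rplus/0]_(j : S) F j.
Proof.
move=> F0; rewrite (bigD1 i) //=.
have := Rsum_ge0 (index_enum S) (fun j => j != i) (fun j _ => F0 j); lra.
Qed.

Lemma sum_over_support {S : finType} {P : pred S} {F : S -> R} :
  (forall y, ~~ P y -> F y = 0) -> \big[Rplus/0]_(y | P y) F y = \big[Rplus/0]_y F y.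
Proof. by move=> F0; rewrite big_mkcond; apply: eq_bigr => y _; case: ifP => // /negbT /F0. Qed.

Lemma is_series_0 : is_series (fun _ : nat => 0) 0.
Proof.
apply: (filterlim_ext (fun _ => 0)) => [k|]; first by rewrite sum_n_const Rmult_0_r.
exact: filterlim_const.
Qed.

Lemma is_series_big {I : Type} (r : seq I) (P : pred I) {F : I -> nat -> R} {l : I -> R} :
  (forall i, P i -> is_series (F i) (l i)) ->
  is_series (fun k => \big[Rplus/0]_(i <- r | P i) F i k) (\big[Rplus/0]_(i <- r | P i) l i).
Proof.
move=> Fl; elim: r => [|i r IH].
  rewrite big_nil; eapply is_series_ext; last exact: is_series_0.
  by move=> k; rewrite big_nil.
rewrite big_cons; case Pi: (P i); last first.
  by eapply is_series_ext; last exact: IH; move=> k; rewrite big_cons Pi.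
eapply is_series_ext; last exact: is_series_plus (Fl i Pi) IH.
by move=> k; rewrite big_cons Pi.
Qed.

Section Matrices.
Context {S : finType}.
Implicit Types M Q : mat S.

Lemma mmulA M1 M2 M3 : mmul (mmul M1 M2) M3 = mmul M1 (mmul M2 M3).
Proof.
apply: functional_extensionality => i; apply: functional_extensionality => j.
rewrite /mmul; under eq_bigr => k _ do rewrite big_distrl /=.
rewrite exchange_big /=; apply: eq_bigr => l _.
by rewrite big_distrr /=; apply: eq_bigr => k _; rewrite Rmult_assoc.
Qed.

Lemma mmul1m M : mmul (@mid S) M = M.
Proof.
apply: functional_extensionality => i; apply: functional_extensionality => j.
rewrite /mmul /mid (bigD1 i) //= eqxx Rmult_1_l big1 ?Rplus_0_r // => l li.
by rewrite eq_sym (negbTE li) Rmult_0_l.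
Qed.

Lemma mmulm1 M : mmul M (@mid S) = M.
Proof.
apply: functional_extensionality => i; apply: functional_extensionality => j.
rewrite /mmul /mid (bigD1 j) //= eqxx Rmult_1_r big1 ?Rplus_0_r // => l lj.
by rewrite (negbTE lj) Rmult_0_r.
Qed.

Lemma mpowSl Q k : mpow Q k.+1 = mmul Q (mpow Q k).
Proof.
elim: k => [|k IH]; first by rewrite /= mmul1m mmulm1.
by rewrite -[LHS]/(mmul (mpow Q k.+1) Q) {1}IH mmulA.
Qed.

Definition mat_norm Q : R := \big[Rplus/0]_i \big[Rplus/0]_j Rabs (Q i j).

Lemma mpow_norm Q k i j : Rabs (mpow Q k i j) <= mat_norm Q ^ k.
Proof.
have norm_ge0 : 0 <= mat_norm Q.
  by apply: Rsum_ge0 => a _; apply: Rsum_ge0 => b _; apply: Rabs_pos.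
elim: k i j => [|k IH] i j /=.
  by rewrite /mid; case: (i == j); rewrite ?Rabs_R1 ?Rabs_R0; lra.
apply: Rle_trans (Rabs_sum _) _.
apply: (@Rle_trans _ (\big[Rplus/0]_l (mat_norm Q ^ k * Rabs (Q l j)))).
  apply: Rle_sum => l _; rewrite Rabs_mult.
  by apply: Rmult_le_compat_r; [apply: Rabs_pos | apply: IH].
rewrite -big_distrr /= Rmult_comm; apply: Rmult_le_compat_r; first exact: pow_le.
apply: Rle_sum => l _.
by apply: (Rle_term_sum (fun b => Rabs (Q l b))) => b; apply: Rabs_pos.
Qed.

Lemma mexp_series Q s i j :
  is_series (fun k => s ^ k / INR (Factorial.fact k) * mpow Q k i j) (mexp Q s i j).
Proof.
apply/is_series_Reals; apply: epsilon_spec.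
suff [l Hl] : ex_series (fun k => s ^ k / INR (Factorial.fact k) * mpow Q k i j).
  by exists l; apply/is_series_Reals.
apply: (@ex_series_le _ _ _ (fun k => / INR (Factorial.fact k) * (Rabs s * mat_norm Q) ^ k)).
  move=> k; rewrite /norm /= /abs /= Rabs_mult /Rdiv Rabs_mult Rpow_mult_distr -RPow_abs.
  have fact_inv : 0 < / INR (Factorial.fact k) by apply: Rinv_0_lt_compat; apply: INR_fact_lt_0.
  rewrite (Rabs_pos_eq _ (Rlt_le _ _ fact_inv)).
  have := mpow_norm Q k i j; have := pow_le _ k (Rabs_pos s) => sk hQ.
  have := Rmult_le_compat_l _ _ _ (Rmult_le_pos _ _ sk (Rlt_le _ _ fact_inv)) hQ; lra.
have [l Hl] := exist_exp (Rabs s * mat_norm Q).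
by exists l; apply/is_series_Reals.
Qed.

End Matrices.

(** * Lumpability *)

Section Lumpability.
Context {S T : finType} (f : S -> T).

Definition lumpable (M : mat S) (N : mat T) : Prop :=
  forall x c, \big[Rplus/0]_(y | f y == c) M x y = N (f x) c.

Lemma mid_lumpable : lumpable (@mid S) (@mid T).
Proof.
move=> x c; rewrite /mid; have [<-|fxc] := eqVneq (f x) c.
  rewrite (bigD1 x) //= eqxx big1 ?Rplus_0_r // => y /andP[_ yx].
  by rewrite eq_sym (negbTE yx).
rewrite big1 // => y /eqP fyc; case: eqP => // xy.
by move: fxc; rewrite xy fyc eqxx.
Qed.

Lemma mmul_lumpable M1 M2 N1 N2 :
  lumpable M1 N1 -> lumpable M2 N2 -> lumpable (mmul M1 M2) (mmul N1 N2).
Proof.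
move=> L1 L2 x c; rewrite /mmul exchange_big /=.
under eq_bigr => z _ do rewrite -big_distrr /= L2.
rewrite (partition_big f predT) //=; apply: eq_bigr => c' _.
by rewrite -L1 big_distrl /=; apply: eq_bigr => z /eqP <-.
Qed.

Lemma mpow_lumpable {Q G} k : lumpable Q G -> lumpable (mpow Q k) (mpow G k).
Proof.
move=> L; elim: k => [|k IH] /=; first exact: mid_lumpable.
exact: mmul_lumpable.
Qed.

Lemma mexp_lumpable Q G s : lumpable Q G -> lumpable (mexp Q s) (mexp G s).
Proof.
move=> L x c.
have := is_series_big (index_enum S) (fun y => f y == c) (fun y _ => mexp_series Q s x y).
move=> /(is_series_unique _ _) <-; rewrite -(is_series_unique _ _ (mexp_series G s (f x) c)).
by apply: Series_ext => k; rewrite -big_distrr /= (mpow_lumpable k L).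
Qed.

Lemma trans_lumpable D tb (GS : nat -> mat S) (GT : nat -> mat T) u t :
  (forall d, lumpable (GS d) (GT d)) -> lumpable (trans D tb GS u t) (trans D tb GT u t).
Proof.
move=> L; rewrite /trans; elim: D {1 3}D => [|k IH] D' /=; first exact: mid_lumpable.
by apply: mmul_lumpable => //; apply: mexp_lumpable.
Qed.

Lemma lprob_lumpable {PS : R -> R -> mat S} {PT : R -> R -> mat T} :
  (forall u t, lumpable (PS u t) (PT u t)) ->
  forall ts cs t0 x0, lprob f PS t0 x0 ts cs = lprob (fun c : T => c) PT t0 (f x0) ts cs.
Proof.
move=> L; elim=> [|t ts IH] [|c cs] t0 x0 //=.
under eq_bigr => x /eqP fx do rewrite IH fx.
by rewrite -big_distrl /= L big_pred1_eq.
Qed.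

Lemma fdd_lumpable (PS : R -> R -> mat S) (PT : R -> R -> mat T) u pi ts cs :
  (forall u t, lumpable (PS u t) (PT u t)) ->
  fdd f PS u pi ts cs = fdd (fun c : T => c) PT u (pushfwd f pi) ts cs.
Proof.
move=> L; rewrite /fdd /pushfwd.
under eq_bigr => x _ do rewrite (lprob_lumpable L).
rewrite (partition_big f predT) //=; apply: eq_bigr => c _.
by rewrite big_distrl /=; apply: eq_bigr => x /eqP ->.
Qed.

Definition generator (off : mat S) : mat S :=
  fun x y => if x == y then - \big[Rplus/0]_(z | z != x) off x z else off x y.

(* Leaving x for another state of its own fibre does not move f x, so only the
   rates into the other fibres matter; the diagonal is then fixed by the row sums. *)
Lemma generator_lumpable (off : mat S) (N : mat T) :
  (forall a, \big[Rplus/0]_c N a c = 0) ->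
  (forall x c, c != f x -> \big[Rplus/0]_(y | f y == c) off x y = N (f x) c) ->
  lumpable (generator off) N.
Proof.
move=> N0 Loff x c; rewrite /generator.
have [cfx|] := eqVneq c (f x); last first.
  move=> cfx; rewrite -Loff //; apply: eq_bigr => y /eqP fyc.
  by case: eqP => // xy; move: cfx; rewrite -fyc xy eqxx.
rewrite cfx (bigD1 x) //= eqxx.
rewrite [X in _ + X](eq_bigr (off x)); last by move=> y /andP[_ yx]; rewrite eq_sym (negbTE yx).
have leave : \big[Rplus/0]_(z | z != x) off x z =
    \big[Rplus/0]_(y | (f y == f x) && (y != x)) off x y
    + \big[Rplus/0]_(c' | c' != f x) N (f x) c'.
  rewrite (bigID (fun z => f z == f x)) /=; congr (_ + _).
    by apply: eq_bigl => y; rewrite andbC.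
  rewrite (partition_big f (fun c' => c' != f x)) /=; last first.
    by move=> y /andP[].
  apply: eq_bigr => c' c'fx; rewrite -Loff //; apply: eq_bigl => y.
  have [fyc|] := eqVneq (f y) c'; rewrite ?andbF // fyc c'fx !andbT.
  by apply/eqP => yx; move: c'fx; rewrite -fyc yx eqxx.
have := N0 (f x); rewrite (bigD1 (f x)) //= leave; lra.
Qed.

End Lumpability.

(** * Detailed balance *)

Section DetailedBalance.
Context {S : finType}.

Definition stationary (g : S -> R) (Q : mat S) : Prop :=
  forall b, \big[Rplus/0]_a (g a * Q a b) = 0.

Definition reversible (g : S -> R) (Q : mat S) : Prop :=
  forall a b, g a * Q a b = g b * Q b a.

Lemma mpow_reversible {g Q} k : reversible g Q -> reversible g (mpow Q k).
Proof.
move=> rev; elim: k => [|k IH] a b.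
  by rewrite /= /mid eq_sym; case: eqP => [->|]; lra.
rewrite {2}mpowSl [mpow Q k.+1]/= /mmul !big_distrr /=; apply: eq_bigr => l _.
rewrite -Rmult_assoc IH Rmult_assoc (Rmult_comm (mpow Q k l a)) -Rmult_assoc rev.
ring.
Qed.

Lemma mexp_reversible {g Q} s : reversible g Q -> reversible g (mexp Q s).
Proof.
move=> rev a b.
rewrite -(is_series_unique _ _ (mexp_series Q s a b)) -(is_series_unique _ _ (mexp_series Q s b a)).
rewrite -!Series_scal_l; apply: Series_ext => k.
rewrite Rmult_comm Rmult_assoc (Rmult_comm _ (g a)) (mpow_reversible k rev a b); ring.
Qed.

End DetailedBalance.

Lemma sum_ord_pick (N k : nat) (F : nat -> R) :
  \big[Rplus/0]_(j : 'I_N) (if (j : nat) == k then F j else 0) = if (k < N)%N then F k else 0.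
Proof.
case: ltnP => kN.
  by rewrite -big_mkcond (big_pred1 (Ordinal kN)) // => j; rewrite -val_eqE.
by rewrite big1 // => j _; case: eqP => // jk; have := ltn_ord j; lia.
Qed.

Lemma sum_ord_pickS (N k : nat) (F : nat -> R) :
  \big[Rplus/0]_(j : 'I_N) (if (j : nat).+1 == k then F j else 0)
  = if (0 < k <= N)%N then F k.-1 else 0.
Proof.
case: k => [|k]; first by rewrite big1.
by under eq_bigr do rewrite eqSS; apply: sum_ord_pick.
Qed.

Section BirthDeath.
Variables (n : nat) (rho eta : R).
Local Notation Gamma := (@Gam n rho eta).

Definition birth_rate (k : nat) : R := INR (n - k) ^ 2 / eta.
Definition death_rate (k : nat) : R := rho / 2 * INR k.

Lemma Gam_split (m m' : 'I_n.+1) : Gamma m m' =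
  (if (m' : nat) == m.+1 then birth_rate m else 0)
  + (if (m' : nat).+1 == m then death_rate m else 0)
  + (if (m' : nat) == m then - death_rate m - birth_rate m else 0).
Proof.
rewrite /Gam /birth_rate /death_rate -val_eqE; move: (INR (n - m)) (INR m) => u d.
by do 3 (case: eqP => ?); try (exfalso; lia); ring.
Qed.

Lemma Gam_row_sum (m : 'I_n.+1) : \big[Rplus/0]_m' Gamma m m' = 0.
Proof.
under eq_bigr do rewrite Gam_split.
rewrite !big_split /= (sum_ord_pick _ _ (fun=> birth_rate m)).
rewrite (sum_ord_pickS _ _ (fun=> death_rate m)) (sum_ord_pick _ _ (fun=> _)).
rewrite ltn_ord (ltnW (ltn_ord m)) andbT.
have birth_n : birth_rate n = 0 by rewrite /birth_rate subnn /Rdiv /=; ring.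
have birth : (if (m.+1 < n.+1)%N then birth_rate m else 0) = birth_rate m.
  case: ltnP => // mn; rewrite (_ : (m : nat) = n) ?birth_n //.
  by have := ltn_ord m; lia.
have death : (if (0 < m)%N then death_rate m else 0) = death_rate m.
  by case: posnP => // ->; rewrite /death_rate /=; ring.
rewrite birth death; ring.
Qed.

Variable gam : 'I_n.+1 -> R.
Local Notation g k := (gam (inord k)).

Lemma Gam_col_sum (j : 'I_n.+1) :
  \big[Rplus/0]_m (gam m * Gamma m j) =
  (if (0 < j)%N then g j.-1 * birth_rate j.-1 else 0)
  + (if (j < n)%N then g j.+1 * death_rate j.+1 else 0)
  + g j * (- death_rate j - birth_rate j).
Proof.
rewrite (eq_bigr (fun m : 'I_n.+1 =>
    (if (m : nat).+1 == j then g m * birth_rate m else 0)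
    + (if (m : nat) == j.+1 then g m * death_rate m else 0)
    + (if (m : nat) == j then g m * (- death_rate m - birth_rate m) else 0))); last first.
  move=> m _; rewrite Gam_split inord_val ![_ == (m : nat)]eq_sym [_ == (m : nat).+1]eq_sym.
  by do 3 (case: ifP => _); ring.
rewrite !big_split /= (sum_ord_pickS _ _ (fun k => g k * birth_rate k)).
rewrite (sum_ord_pick _ _ (fun k => g k * death_rate k)).
rewrite (sum_ord_pick _ _ (fun k => g k * (- death_rate k - birth_rate k))).
by rewrite ltn_ord (ltnW (ltn_ord j)) andbT (inord_val j).
Qed.

Hypothesis gam_stationary : stationary gam Gamma.

Lemma stationary_balance k : (k < n)%N -> g k * birth_rate k = g k.+1 * death_rate k.+1.
Proof.
elim: k => [|k IH] kn.
  have := gam_stationary (inord 0); rewrite Gam_col_sum inordK //= kn.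
  by rewrite /death_rate /=; lra.
have := gam_stationary (inord k.+1); rewrite Gam_col_sum inordK /=; last lia.
by rewrite kn IH; [lra | lia].
Qed.

Lemma Gam_reversible : reversible gam Gamma.
Proof.
move=> m m'; rewrite !Gam_split -(inord_val m) -(inord_val m') !inordK ?ltn_ord //.
move: (m : nat) (m' : nat) (ltn_ord m) (ltn_ord m') => a b an bn.
do 6 (case: eqP => ?); try (exfalso; lia); subst.
all: rewrite ?Rplus_0_l ?Rplus_0_r ?Rmult_0_r ?stationary_balance //; lia.
Qed.

End BirthDeath.

Section Configurations.
Context {A : finType} {n : nat}.
Implicit Types (X Y : cfg A n) (x y : Nsp A n) (w : hap A -> nat) (rem add : seq (hap A)).

Definition type_a (h : hap A) : nat := if h is inl (inl _) then 1 else 0.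
Definition type_b (h : hap A) : nat := if h is inl (inr _) then 1 else 0.
Definition type_c (h : hap A) : nat := if h is inr _ then 1 else 0.

Definition wsum w (f : hap A -> nat) : nat := \sum_h w h * f h.
Definition wsum_seq w (s : seq (hap A)) : nat := \sum_(h <- s) w h.

Lemma wsum_type_a X : wsum type_a (fun h => X h) = na X.
Proof.
rewrite /wsum /hap !big_sumType /= [E in (_ + E + _)%N]big1 // [E in (_ + E)%N]big1 //.
by rewrite !addn0; apply: eq_bigr => i _; rewrite mul1n.
Qed.

Lemma wsum_type_b X : wsum type_b (fun h => X h) = nb X.
Proof.
rewrite /wsum /hap !big_sumType /= [E in (E + _ + _)%N]big1 // [E in (_ + E)%N]big1 //.
by rewrite add0n addn0; apply: eq_bigr => j _; rewrite mul1n.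
Qed.

Lemma wsum_type_c X : wsum type_c (fun h => X h) = nc X.
Proof.
rewrite /wsum /hap !big_sumType /= [E in (E + _ + _)%N]big1 // [E in (_ + E + _)%N]big1 //.
by rewrite !add0n; apply: eq_bigr => -[i j] _; rewrite mul1n.
Qed.

Lemma wsum_count_mem w s : wsum w (fun h => count_mem h s) = wsum_seq w s.
Proof.
elim: s => [|z s IH]; first by rewrite /wsum /wsum_seq big_nil big1 // => h _; rewrite muln0.
rewrite /wsum_seq big_cons -/(wsum_seq w s) -IH /wsum.
under eq_bigr => h _ do rewrite /= mulnDr.
rewrite big_split /= (bigD1 z) //= eqxx muln1 big1 ?addn0 // => h hz.
by rewrite eq_sym (negbTE hz) muln0.
Qed.

Lemma wsum_shift w {f g : hap A -> nat} {rem add} :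
  (forall h, g h + count_mem h rem = f h + count_mem h add)%N ->
  (wsum w g + wsum_seq w rem = wsum w f + wsum_seq w add)%N.
Proof.
move=> fg; rewrite -!wsum_count_mem /wsum -!big_split /=.
by apply: eq_bigr => h _; rewrite -!mulnDr fg.
Qed.

Lemma leq_wsum {w} (f : hap A -> nat) {h} : w h = 1%N -> (f h <= wsum w f)%N.
Proof. by move=> wh; rewrite /wsum (bigD1 h) //= wh mul1n leq_addr. Qed.

Lemma hap_type (h : hap A) : type_a h = 1%N \/ type_b h = 1%N \/ type_c h = 1%N.
Proof. by case: h => [[i|j]|p]; auto. Qed.

Lemma mvP {X Y rem add} :
  reflect (forall h, Y h + count_mem h rem = X h + count_mem h add)%N (mv X Y rem add).
Proof. by apply: (iffP forallP) => XY h; apply/eqP; apply: XY. Qed.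

Lemma mv_inj {X Y1 Y2 rem add} : mv X Y1 rem add -> mv X Y2 rem add -> Y1 = Y2.
Proof.
move=> /mvP XY1 /mvP XY2; apply/ffunP => h; apply: val_inj.
by apply/eqP; rewrite -(eqn_add2r (count_mem h rem)) XY1 XY2.
Qed.

Lemma mv_nc {X Y rem add} : mv X Y rem add ->
  (nc Y + wsum_seq type_c rem = nc X + wsum_seq type_c add)%N.
Proof. by move=> /mvP /(wsum_shift type_c); rewrite !wsum_type_c. Qed.

Lemma Nsp_na_nb x : na (val x) = nb (val x).
Proof. by case: x => X /= /andP[/eqP]. Qed.

Lemma Nsp_na_nc x : (na (val x) + nc (val x))%N = n.
Proof. by case: x => X /= /andP[_ /eqP]. Qed.

Lemma ccountE x : ccount x = nc (val x) :> nat.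
Proof. by rewrite /ccount inordK //; have := Nsp_na_nc x; lia. Qed.

(* The last two hypotheses say that the move preserves n^(a) - n^(b) and
   n^(a) + n^(c), the two quantities fixed on [Nsp A n]. *)
Lemma mv_exists x rem add :
  (forall h, count_mem h rem <= val x h)%N ->
  (wsum_seq type_a add + wsum_seq type_b rem = wsum_seq type_b add + wsum_seq type_a rem)%N ->
  (wsum_seq type_a add + wsum_seq type_c add = wsum_seq type_a rem + wsum_seq type_c rem)%N ->
  exists y : Nsp A n, mv (val x) (val y) rem add.
Proof.
move=> rem_x ab ac.
pose v h := (val x h + count_mem h add - count_mem h rem)%N.
have mv_v h : (v h + count_mem h rem = val x h + count_mem h add)%N.
  by rewrite subnK //; apply: leq_trans (rem_x h) (leq_addr _ _).
have va := wsum_shift type_a mv_v; rewrite wsum_type_a in va.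
have vb := wsum_shift type_b mv_v; rewrite wsum_type_b in vb.
have vc := wsum_shift type_c mv_v; rewrite wsum_type_c in vc.
have xab := Nsp_na_nb x; have xac := Nsp_na_nc x.
have v_le h : (v h <= n)%N.
  by case: (hap_type h) => wh; [|case: wh => wh]; have := leq_wsum v wh; lia.
pose Y : cfg A n := [ffun h => inord (v h)].
have YE h : Y h = v h :> nat by rewrite ffunE inordK // ltnS.
have wsumY w : wsum w (fun h => Y h) = wsum w v by apply: eq_bigr => h _; rewrite YE.
have inN_Y : inN Y.
  by rewrite /inN -wsum_type_a -wsum_type_b -wsum_type_c !wsumY; apply/andP; split; apply/eqP; lia.
by exists (exist _ Y inN_Y); apply/mvP => h /=; rewrite YE mv_v.
Qed.

Lemma sum_ind_mv x rem add (r : R) :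
  (r <> 0 -> exists y : Nsp A n, mv (val x) (val y) rem add) ->
  \big[Rplus/0]_(y : Nsp A n) (Defs.ind (mv (val x) (val y) rem add) * r) = r.
Proof.
have [->|r0 ex] := Req_dec r 0; first by rewrite big1 // => y _; rewrite Rmult_0_r.
have [y0 mv_y0] := ex r0.
rewrite (bigD1 y0) //= mv_y0 /Defs.ind Rmult_1_l big1 ?Rplus_0_r // => y yy0.
case mv_y: (mv _ _ _ _); last by rewrite Rmult_0_l.
by move: yy0; rewrite (val_inj (mv_inj mv_y mv_y0)) eqxx.
Qed.

End Configurations.

Lemma INR_sum {I : Type} (r : seq I) (P : pred I) (F : I -> nat) :
  INR (\sum_(i <- r | P i) F i) = \big[Rplus/0]_(i <- r | P i) INR (F i).
Proof. by apply: (big_morph INR) => // a b; apply: plus_INR. Qed.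

Section MoveRates.
Context {A : finType} {n : nat} (theta rho : R) (P : A -> A -> R) (eta : R).
Implicit Types (x y : Nsp A n).

Definition recomb_rate x y : R :=
  \big[Rplus/0]_(i : A) \big[Rplus/0]_(j : A)
    (Defs.ind (mv (val x) (val y) [:: hc i j] [:: ha i; hb j]) * (rho / 2 * cnt x (hc i j))).

Definition join_rate x y : R :=
  \big[Rplus/0]_(i : A) \big[Rplus/0]_(j : A)
    (Defs.ind (mv (val x) (val y) [:: ha i; hb j] [:: hc i j])
     * (/ eta * cnt x (ha i) * cnt x (hb j))).

Lemma ind_mv_nc x y rem add (r : R) :
  (nc (val y) + wsum_seq type_c rem <> nc (val x) + wsum_seq type_c add)%N ->
  Defs.ind (mv (val x) (val y) rem add) * r = 0.
Proof.
move=> nc_ne; case mv_xy: (mv _ _ _ _); last by rewrite /Defs.ind Rmult_0_l.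
by case: nc_ne; apply: mv_nc.
Qed.

(* The mutation and same-type coalescence terms of [Lam_off] preserve n^(c). *)
Lemma Lam_off_nc_neq x y : nc (val y) <> nc (val x) ->
  Lam_off theta rho P eta x y = recomb_rate x y + join_rate x y.
Proof.
move=> nc_ne; rewrite /Lam_off /recomb_rate /join_rate /=.
rewrite [E in E + _ + _ + _ + _]big1 ?[E in _ + E + _ + _ + _]big1 ?[E in _ + E + _ + _]big1;
  try ring.
all: move=> i _; apply: big1 => j _; try (apply: big1 => k _; apply: big1 => l _).
all: apply: ind_mv_nc; move: nc_ne; rewrite /wsum_seq !big_cons !big_nil /=; lia.
Qed.

Lemma recomb_rate_eq0 x y : (nc (val y)).+1 <> nc (val x) -> recomb_rate x y = 0.
Proof.
move=> nc_ne; apply: big1 => i _; apply: big1 => j _.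
by apply: ind_mv_nc; move: nc_ne; rewrite /wsum_seq !big_cons !big_nil /=; lia.
Qed.

Lemma join_rate_eq0 x y : nc (val y) <> (nc (val x)).+1 -> join_rate x y = 0.
Proof.
move=> nc_ne; apply: big1 => i _; apply: big1 => j _.
by apply: ind_mv_nc; move: nc_ne; rewrite /wsum_seq !big_cons !big_nil /=; lia.
Qed.

Lemma cnt_pos x h : cnt x h <> 0 -> (0 < val x h)%N.
Proof. by move=> nz; rewrite lt0n; apply/eqP => x0; apply: nz; rewrite /cnt x0. Qed.

Lemma recomb_rate_sum x : \big[Rplus/0]_y recomb_rate x y = death_rate rho (nc (val x)).
Proof.
rewrite /recomb_rate exchange_big /=; under eq_bigr => i _ do rewrite exchange_big /=.
transitivity (\big[Rplus/0]_(i : A) \big[Rplus/0]_(j : A) (rho / 2 * cnt x (hc i j))).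
  apply: eq_bigr => i _; apply: eq_bigr => j _.
  apply: sum_ind_mv => /Rmult_neq_0_reg [_ /cnt_pos x_ij].
  apply: mv_exists; rewrite /wsum_seq ?big_cons ?big_nil //= => h.
  by rewrite addn0; case: eqP => // <-.
rewrite /death_rate /nc INR_sum (pair_bigA _ (fun i j => rho / 2 * cnt x (hc i j))).
rewrite -big_distrr /=.
by congr (_ * _); apply: eq_bigr => -[i j].
Qed.

Lemma join_rate_sum x : \big[Rplus/0]_y join_rate x y = birth_rate n eta (nc (val x)).
Proof.
rewrite /join_rate exchange_big /=; under eq_bigr => i _ do rewrite exchange_big /=.
transitivity (\big[Rplus/0]_(i : A) \big[Rplus/0]_(j : A) (/ eta * cnt x (ha i) * cnt x (hb j))).
  apply: eq_bigr => i _; apply: eq_bigr => j _.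
  apply: sum_ind_mv => /Rmult_neq_0_reg [/Rmult_neq_0_reg [_ /cnt_pos x_i] /cnt_pos x_j].
  apply: mv_exists; rewrite /wsum_seq ?big_cons ?big_nil //= => -[[a|b]|p] //=; rewrite ?addn0.
  - by case: eqP => // <-.
  - by case: eqP => // <-.
have -> : birth_rate n eta (nc (val x)) = / eta * INR (na (val x)) * INR (nb (val x)).
  rewrite /birth_rate -Nsp_na_nb (_ : n - nc (val x) = na (val x))%N /Rdiv; first ring.
  by have := Nsp_na_nc x; lia.
under eq_bigr => i _ do rewrite -big_distrr /=.
by rewrite -big_distrl -big_distrr /na /nb !INR_sum.
Qed.

Lemma recomb_rate_fiber x (c : 'I_n.+1) :
  \big[Rplus/0]_(y | ccount y == c) recomb_rate x y
  = if (c : nat).+1 == ccount x then death_rate rho (ccount x) else 0.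
Proof.
rewrite ccountE; case: eqP => [c_x|c_x].
  rewrite sum_over_support ?recomb_rate_sum // => y /eqP y_c.
  apply: recomb_rate_eq0; rewrite -c_x => /eq_add_S ncy.
  by apply: y_c; apply: ord_inj; rewrite ccountE.
by rewrite big1 // => y /eqP y_c; apply: recomb_rate_eq0; rewrite -(ccountE y) y_c.
Qed.

Lemma join_rate_fiber x (c : 'I_n.+1) :
  \big[Rplus/0]_(y | ccount y == c) join_rate x y
  = if (c : nat) == (ccount x).+1 then birth_rate n eta (ccount x) else 0.
Proof.
rewrite ccountE; case: eqP => [c_x|c_x].
  rewrite sum_over_support ?join_rate_sum // => y /eqP y_c.
  by apply: join_rate_eq0; rewrite -c_x => ncy; apply: y_c; apply: ord_inj; rewrite ccountE.
by rewrite big1 // => y /eqP y_c; apply: join_rate_eq0; rewrite -(ccountE y) y_c.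
Qed.

Lemma Lam_off_fiber x (c : 'I_n.+1) : c != ccount x ->
  \big[Rplus/0]_(y | ccount y == c) Lam_off theta rho P eta x y = @Gam n rho eta (ccount x) c.
Proof.
move=> c_x; rewrite (eq_bigr (fun y => recomb_rate x y + join_rate x y)); last first.
  move=> y /eqP y_c; apply: Lam_off_nc_neq; rewrite -!ccountE => /ord_inj y_x.
  by move: c_x; rewrite -y_c y_x eqxx.
rewrite big_split /= recomb_rate_fiber join_rate_fiber Gam_split.
have -> : ((c : nat) == ccount x) = false by apply/negbTE.
ring.
Qed.

Lemma Lam_lumpable : lumpable (@ccount A n) (Lam theta rho P eta) (@Gam n rho eta).
Proof. exact: generator_lumpable (Gam_row_sum n rho eta) Lam_off_fiber. Qed.

End MoveRates.

Theorem mainTheorem2 (A : finType) (n : nat) (theta rho : R) (P : A -> A -> R)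
    (D : nat) (tb : nat -> R) (eta : nat -> R) :
  (1 <= n)%N ->
  0 <= theta -> 0 <= rho ->
  (forall i j, 0 <= P i j) -> (forall i, \big[Rplus/0]_(j : A) P i j = 1) ->
  (0 < D)%N ->
  (forall d, (1 <= d)%N -> (d.+1 < D)%N -> tb d < tb d.+1) ->
  ((1 < D)%N -> tb D.-1 < 0) ->
  (forall d, (d < D)%N -> 0 < eta d) ->
  (forall (u : R) (pi : Nsp A n -> R),
     u <= 0 ->
     (forall x, 0 <= pi x) -> \big[Rplus/0]_(x : Nsp A n) pi x = 1 ->
     forall (ts : seq R) (cs : seq 'I_n.+1),
       times_ok u ts ->
       fdd (@ccount A n) (trans D tb (fun d => Lam theta rho P (eta d))) u pi ts cs
       = fdd (fun m : 'I_n.+1 => m) (trans D tb (fun d => @Gam n rho (eta d))) u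
             (pushfwd (@ccount A n) pi) ts cs)
  /\
  (0 < rho ->
   forall d, (d < D)%N ->
   forall gam : 'I_n.+1 -> R,
     (forall m, 0 <= gam m) -> \big[Rplus/0]_(m : 'I_n.+1) gam m = 1 ->
     (forall m', \big[Rplus/0]_(m : 'I_n.+1) (gam m * @Gam n rho (eta d) m m') = 0) ->
     forall (s : R), 0 <= s -> forall m m' : 'I_n.+1,
       gam m * mexp (@Gam n rho (eta d)) s m m'
       = gam m' * mexp (@Gam n rho (eta d)) s m' m).
Proof.
move=> _ _ _ _ _ _ _ _ _; split.
  move=> u pi _ _ _ ts cs _; apply: fdd_lumpable => s t.
  by apply: trans_lumpable => d; apply: Lam_lumpable.
move=> _ d _ gam _ _ gam_stationary s _ m m'.
by apply: mexp_reversible; apply: Gam_reversible.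
Qed.
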